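(* Let $G$ be a graph of order $n$ and diameter $d$. Let $T$ be a reduced tree decomposition of $G$ of length $\ell$ and width $w$. If there is a resolving set of size $k$ in $G$, then $n=\mathcal{O}(kd^2(2\ell+1)^{3w+1})$, where the constant implicit in the $\mathcal{O}$-notation is absolute (independent of $G$, $k$, $d$, $\ell$, $w$).
   Context: A set $R$ of vertices of a graph $G$ is a resolving set if for each pair $u,v$ of distinct vertices there is $x\in R$ with $d_G(x,u)\neq d_G(x,v)$. A tree decomposition of $G$ is a tree $T$ whose vertices (bags) are subsets of $V(G)$ such that: the union of all bags is $V(G)$; for every edge of $G$ some bag contains both ends; and if bag $Y$ lies on the path in $T$ from bag $X$ to bag $Z$, then $X\cap Z\subseteq Y$. Its width is $\max\{|X|-1: X\in V(T)\}$. The diameter of a bag $X$ is $\max_{x,y\in X} d_G(x,y)$ (distance in $G$), and the length of the decomposition is the largest diameter of a bag. A tree decomposition is reduced if no bag is a subset of another bag. *)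

From mathcomp Require Import all_boot.
Set Implicit Arguments. Unset Strict Implicit. Unset Printing Implicit Defensive.

Section Graphs.
Variable T : finType.
Variable e : rel T.

Definition simple_graph := symmetric e /\ irreflexive e.

Definition connected_graph := forall x y : T, connect e x y.

Definition walk_of_len (x y : T) (k : nat) : bool :=
  [exists p : k.-tuple T, path e x p && (last x p == y)].

(* d_G(x,y): least k such that there is an x-y walk of length k
   (= length of a shortest x-y path); it is #|T| if y is unreachable,
   which never happens in a connected graph. *)
Definition gdist (x y : T) : nat :=
  find (walk_of_len x y) (iota 0 #|T|).

Definition diameter : nat := \max_(x : T) \max_(y : T) gdist x y.

Definition resolving (R : {set T}) : Prop :=
  forall u v : T, u != v -> exists2 x, x \in R & gdist x u != gdist x v.

Variable B : finType.
Variable t : rel B.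
Variable bag : B -> {set T}.

Definition simple_path (X Z : B) (p : seq B) : Prop :=
  path t X p /\ last X p = Z /\ uniq (X :: p).

Definition is_tree : Prop :=
  [/\ symmetric t, irreflexive t & forall X Z : B, exists! p, simple_path X Z p].

Definition on_tree_path (X Z Y : B) : Prop :=
  exists p, simple_path X Z p /\ Y \in X :: p.

Definition tree_decomposition : Prop :=
  [/\ is_tree,
      (forall v : T, exists X : B, v \in bag X),
      (forall u v : T, e u v -> exists X : B, (u \in bag X) && (v \in bag X))
    & (forall X Y Z : B, on_tree_path X Z Y -> bag X :&: bag Z \subset bag Y)].

Definition reduced_td : Prop :=
  forall X Y : B, X != Y -> ~~ (bag X \subset bag Y).

Definition td_width : nat := \max_(X : B) #|bag X| - 1.

Definition bag_diam (X : B) : nat :=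
  \max_(x in bag X) \max_(y in bag X) gdist x y.

Definition td_length : nat := \max_(X : B) bag_diam X.

End Graphs.

(* Root the tree decomposition at a bag containing a resolving vertex and give
   every vertex v a home bag containing it.  The key of v is the set of resolving
   vertices homed in the subtree of the deepest ancestor of v's home that has any;
   the keys form a laminar family of nonempty subsets of R (subtrees are nested or
   disjoint), so there are at most 2|R| of them.  The nodes having a given key K as their set of resolving vertices
   below form a chain, and for a vertex v of key K every resolving vertex r has a
   shortest path to v through one of two adhesion sets bag(parent Z) :&: bag(Z) at
   the ends of this chain, or else all of them pass through a subset of the lowest
   bag of the chain.  Distances from v to a set S inside one bag are determined by
   one distance (at most d) and |S| <= w + 1 offsets in [0, 2l], and they determine
   d(r, v) for every r; since R resolves the graph, v is determined by these data.
   Hence each key class has at most (d+1)^2 (2l+1)^(2w+2) + 2^(w+1) (d+1) (2l+1)^(w+1)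
   vertices. *)

From mathcomp Require Import all_boot zify.
Set Implicit Arguments. Unset Strict Implicit. Unset Printing Implicit Defensive.

Section Distance.
Variables (T : finType) (e : rel T).

Lemma gdist_le_walk x y p : path e x p -> last x p = y -> gdist e x y <= size p.
Proof.
move=> ep lp; rewrite /gdist.
have [big|small] := leqP #|T| (size p).
  by apply: leq_trans (find_size _ _) _; rewrite size_iota.
rewrite leqNgt; apply/negP => /(before_find 0); rewrite nth_iota // add0n.
by move/existsPn/(_ (in_tuple p)); rewrite /= ep lp eqxx.
Qed.

Lemma gdistxx x : gdist e x x = 0.
Proof. by apply/eqP; rewrite -leqn0 (@gdist_le_walk _ _ [::]). Qed.

Lemma gdist_le_diameter x y : gdist e x y <= diameter e.
Proof.
apply: leq_trans (leq_bigmax x).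
exact: (leq_bigmax (F := fun y => gdist e x y)).
Qed.

Definition via (S : {set T}) (x y : T) : bool :=
  [exists s in S, gdist e x y == gdist e x s + gdist e s y].

Hypothesis e_connected : connected_graph e.

Lemma shortest_walk x y :
  exists p, [/\ path e x p, last x p = y & size p = gdist e x y].
Proof.
have has_walk : has (walk_of_len e x y) (iota 0 #|T|).
  have /connectP [p ep ->] := e_connected x y.
  case: (shortenP ep) => q eq_q uq _; apply/hasP; exists (size q).
    rewrite mem_iota add0n /=.
    by have := max_card (mem (x :: q)); rewrite (card_uniqP uq).
  by apply/existsP; exists (in_tuple q); rewrite /= eq_q eqxx.
have lt_dist : gdist e x y < #|T| by move: has_walk; rewrite has_find size_iota.
move: has_walk => /(nth_find 0); rewrite -/(gdist e x y) nth_iota // add0n.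
by case/existsP=> q /andP [eq_q /eqP lq]; exists q; rewrite size_tuple.
Qed.

Lemma gdist_triangle x y z : gdist e x z <= gdist e x y + gdist e y z.
Proof.
have [p [ep lp <-]] := shortest_walk x y.
have [q [eq_q lq <-]] := shortest_walk y z.
by rewrite -size_cat; apply: gdist_le_walk; rewrite ?cat_path ?last_cat lp ?ep ?eq_q.
Qed.

Lemma gdist_eq0 x y : gdist e x y = 0 -> x = y.
Proof. by have [p [_ <- <-]] := shortest_walk x y; case: p. Qed.

Lemma via_gdist_eq S r u v : via S r u -> via S r v ->
  {in S, forall s, gdist e s u = gdist e s v} -> gdist e r u = gdist e r v.
Proof.
move=> /exists_inP [s1 Ss1 /eqP ru] /exists_inP [s2 Ss2 /eqP rv] Suv.
have := gdist_triangle r s1 v; have := gdist_triangle r s2 u.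
rewrite -(Suv _ Ss1) (Suv _ Ss2); lia.
Qed.

Lemma exists_edge : 1 < #|T| -> exists x y, e x y.
Proof.
case/card_gt1P=> x [y [_ _ nxy]]; have /connectP [p exp yp] := e_connected x y.
case: p exp yp => [_ yx|z p /= /andP [exz _] _]; last by exists x, z.
by rewrite yx /= eqxx in nxy.
Qed.

Hypothesis e_sym : symmetric e.

Lemma gdistC x y : gdist e x y = gdist e y x.
Proof.
wlog suff: x y / gdist e x y <= gdist e y x.
  by move=> le; apply/eqP; rewrite eqn_leq !le.
have [p [ep lp <-]] := shortest_walk y x.
rewrite -(size_belast y p) -size_rev; apply: gdist_le_walk.
  by rewrite -lp rev_path; apply: sub_path ep => u v; rewrite /= e_sym.
by case: p {ep} lp => [|z p] /= => [<-|_]; rewrite ?rev_cons ?last_rcons.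
Qed.

Lemma viaC S x y : via S x y = via S y x.
Proof.
by apply: eq_existsb => s; rewrite (gdistC y x) (gdistC y s) (gdistC s x) addnC.
Qed.

End Distance.

Section RootedTree.
Variables (B : finType) (t : rel B).
Hypothesis t_sym : symmetric t.
Hypothesis t_unique_path : forall X Z : B, exists! p, simple_path t X Z p.
Variable root : B.

Definition spath (X Z : B) (p : seq B) := [&& path t X p, last X p == Z & uniq (X :: p)].

Lemma spathP X Z p : reflect (simple_path t X Z p) (spath X Z p).
Proof.
by apply: (iffP and3P) => [[? /eqP ? ?] | [? [/eqP ? ?]]]; do ?split.
Qed.

Lemma spath_unique X Z p q : spath X Z p -> spath X Z q -> p = q.
Proof.
move=> /spathP sp /spathP sq; have [r [_ r_unique]] := t_unique_path X Z.
by rewrite -(r_unique _ sp) -(r_unique _ sq).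
Qed.

Lemma exists_root_path Z : exists p, spath root Z p.
Proof. by have [p [/spathP sp _]] := t_unique_path root Z; exists p. Qed.

Definition root_path (Z : B) : seq B := xchoose (exists_root_path Z).
Definition ancestor (Y Z : B) : bool := Y \in root :: root_path Z.
Definition depth (Z : B) : nat := size (root_path Z).
Definition parent (Z : B) : B := last root (belast root (root_path Z)).

Lemma root_pathP Z : spath root Z (root_path Z).
Proof. exact: xchooseP. Qed.

Lemma root_path_unique Z p : spath root Z p -> root_path Z = p.
Proof. exact: spath_unique (root_pathP Z). Qed.

Lemma last_root_path Z : last root (root_path Z) = Z.
Proof. by case/and3P: (root_pathP Z) => _ /eqP. Qed.

Lemma root_path_cat Z p q : root_path Z = p ++ q -> root_path (last root p) = p.
Proof.
move=> eqZ; apply: root_path_unique; have := root_pathP Z.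
rewrite eqZ /spath cat_path -cat_cons cat_uniq eqxx.
by case/and3P=> /andP [-> _] _ /andP [-> _].
Qed.

Lemma ancestor_cat Y Z q : root_path Z = root_path Y ++ q -> ancestor Y Z.
Proof.
by move=> eqZ; rewrite /ancestor eqZ -cat_cons mem_cat -{1}(last_root_path Y) mem_last.
Qed.

Lemma root_path_ancestor Y Z : ancestor Y Z -> exists q, root_path Z = root_path Y ++ q.
Proof.
move=> YZ; move: YZ (@root_path_cat Z); rewrite /ancestor; move: (root_path Z) => s.
by case/splitPl=> p q <- /(_ p q erefl) ->; exists q.
Qed.

Lemma ancestor_root Z : ancestor root Z.
Proof. exact: mem_head. Qed.

Lemma ancestorxx Z : ancestor Z Z.
Proof. by apply: (@ancestor_cat _ _ [::]); rewrite cats0. Qed.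

Lemma ancestor_trans X Y Z : ancestor X Y -> ancestor Y Z -> ancestor X Z.
Proof.
move=> XY /root_path_ancestor [q eqZ].
by rewrite /ancestor eqZ -cat_cons mem_cat; apply/orP; left.
Qed.

Lemma ancestor_depth_eq Y Z : ancestor Y Z -> depth Z <= depth Y -> Y = Z.
Proof.
case/root_path_ancestor=> q eqZ; rewrite /depth eqZ size_cat => le.
have q0 : q = [::] by apply: size0nil; lia.
by rewrite -(last_root_path Y) -(last_root_path Z) eqZ q0 cats0.
Qed.

Lemma ancestor_total X Y Z :
  ancestor X Z -> ancestor Y Z -> ancestor X Y || ancestor Y X.
Proof.
wlog le_XY : X Y / depth X <= depth Y.
  move=> wlog_le; have [|/ltnW le] := leqP (depth X) (depth Y); first exact: wlog_le.
  by move=> XZ YZ; rewrite orbC; apply: wlog_le.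
move=> /root_path_ancestor [p eqX] /root_path_ancestor [q eqY].
apply/orP; left; apply: (@ancestor_cat _ _ (drop (depth X) (root_path Y))).
have : take (depth X) (root_path X ++ p) = take (depth X) (root_path Y ++ q).
  by rewrite -eqX -eqY.
by rewrite take_size_cat // takel_cat // => ->; rewrite cat_take_drop.
Qed.

Lemma parent_rcons Y Z : root_path Z = rcons (root_path Y) Z -> parent Z = Y.
Proof. by rewrite /parent => ->; rewrite belast_rcons /= last_root_path. Qed.

Lemma root_path_edge Y Z :
  t Y Z -> ~~ ancestor Z Y -> root_path Z = rcons (root_path Y) Z.
Proof.
move=> tYZ nZY; apply: root_path_unique; case/and3P: (root_pathP Y) => tp _ up.
rewrite /spath rcons_path last_rcons -rcons_cons rcons_uniq.
by rewrite tp last_root_path tYZ nZY up eqxx.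
Qed.

Lemma ancestor_edge Z X Y :
  t X Y -> ancestor Z X -> ~~ ancestor Z Y -> X = Z /\ Y = parent Z.
Proof.
move=> tXY ZX nZY.
have YX : ancestor Y X.
  apply: contraNT nZY => nYX; apply: ancestor_trans ZX _.
  by apply: (@ancestor_cat _ _ [:: Y]); rewrite (root_path_edge tXY nYX) cats1.
have nXY : ~~ ancestor X Y by apply: contraNN nZY; apply: ancestor_trans.
have eqX := root_path_edge (etrans (t_sym Y X) tXY) nXY.
have XZ : X = Z.
  move: ZX; rewrite /ancestor eqX -rcons_cons mem_rcons in_cons => /orP [/eqP //|ZY].
  by case/negP: nZY.
by split; rewrite // -XZ (parent_rcons eqX).
Qed.

Lemma path_exits_subtree Z x p :
  path t x p -> ancestor Z x -> ~~ ancestor Z (last x p) ->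
  (Z \in x :: p) && (parent Z \in x :: p).
Proof.
elim: p x => [|y p IHp] x /=; first by move=> _ ->.
case/andP=> txy yp Zx; have [Zy|nZy] := boolP (ancestor Z y).
  by move=> /(IHp y yp Zy) /andP [Zp Pp]; rewrite !(in_cons x) Zp Pp !orbT.
by have [-> ->] := ancestor_edge txy Zx nZy; rewrite !in_cons !eqxx !orbT.
Qed.

Lemma child_toward Y X : ancestor Y X -> Y != X ->
  exists Z, [/\ ancestor Z X, parent Z = Y & depth Z = (depth Y).+1].
Proof.
move=> /root_path_ancestor [[|Z q] eqX] neqYX.
  by rewrite -(last_root_path X) eqX cats0 last_root_path eqxx in neqYX.
have eqZ : root_path Z = rcons (root_path Y) Z.
  rewrite -[Z in root_path Z](last_rcons root (root_path Y)).
  by rewrite (@root_path_cat X _ q) // eqX cat_rcons.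
exists Z; split; last by rewrite /depth eqZ size_rcons.
  by apply: (@ancestor_cat _ _ q); rewrite eqX eqZ cat_rcons.
exact: parent_rcons.
Qed.

End RootedTree.

Section TreeDecomposition.
Variables (T : finType) (e : rel T) (B : finType) (t : rel B) (bag : B -> {set T}).

Lemma gdist_le_length X x y :
  x \in bag X -> y \in bag X -> gdist e x y <= td_length e bag.
Proof.
move=> xX yX; apply: leq_trans (leq_bigmax X).
by apply: (bigmax_sup x) => //; apply: (bigmax_sup y).
Qed.

Lemma card_bag_le X : #|bag X| <= (td_width bag).+1.
Proof. by have := leq_bigmax (F := fun X => #|bag X|) X; rewrite /td_width; lia. Qed.

Hypothesis e_connected : connected_graph e.

Lemma parameters_pos X x y : x != y -> x \in bag X -> y \in bag X ->
  [/\ 0 < diameter e, 0 < td_length e bag & 0 < td_width bag].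
Proof.
move=> nxy xX yX; have dxy : 0 < gdist e x y.
  by rewrite lt0n; apply: contra nxy => /eqP /(gdist_eq0 e_connected) ->.
split; first exact: leq_trans dxy (gdist_le_diameter e x y).
  exact: leq_trans dxy (gdist_le_length xX yX).
have : [set x; y] \subset bag X by rewrite subUset !sub1set xX yX.
by move/subset_leq_card; rewrite cards2 nxy; have := card_bag_le X; lia.
Qed.

Hypothesis t_sym : symmetric t.
Hypothesis t_unique_path : forall X Z : B, exists! p, simple_path t X Z p.
Hypothesis edge_in_bag :
  forall u v : T, e u v -> exists X : B, (u \in bag X) && (v \in bag X).
Hypothesis bag_on_tree_path :
  forall X Y Z : B, on_tree_path t X Z Y -> bag X :&: bag Z \subset bag Y.
Variable root : B.

Local Notation ancestor := (ancestor t_unique_path root).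

Definition adhesion (Z : B) : {set T} := bag (parent t_unique_path root Z) :&: bag Z.

Lemma subtree_adhesion Z X Y : ancestor Z X -> ~~ ancestor Z Y ->
  bag X :&: bag Y \subset adhesion Z.
Proof.
move=> ZX nZY; have [p [XYp _]] := t_unique_path X Y; have [tp [lp _]] := XYp.
have := path_exits_subtree t_sym tp ZX; rewrite lp => /(_ nZY) /andP [Zp Pp].
by rewrite subsetI !bag_on_tree_path //; exists p.
Qed.

Lemma walk_meets_adhesion Z X Y a p : path e a p ->
  ancestor Z X -> a \in bag X -> ~~ ancestor Z Y -> last a p \in bag Y ->
  has (mem (adhesion Z)) (a :: p).
Proof.
elim: p a X => [|b p IHp] a X /=.
  move=> _ ZX aX nZY aY.
  by rewrite orbF (subsetP (subtree_adhesion ZX nZY)) // inE aX aY.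
case/andP=> eab bp ZX aX nZY lY; have [W /andP [aW bW]] := edge_in_bag eab.
have [ZW|nZW] := boolP (ancestor Z W).
  by apply/orP; right; apply: IHp ZW bW nZY lY.
by rewrite (subsetP (subtree_adhesion ZX nZW)) // inE aX aW.
Qed.

Lemma via_adhesion Z X Y a b :
  ancestor Z X -> a \in bag X -> ~~ ancestor Z Y -> b \in bag Y -> via e (adhesion Z) a b.
Proof.
move=> ZX aX nZY bY; have [p [ep lp sp]] := shortest_walk e_connected a b.
have /hasP [s ps Ss] : has (mem (adhesion Z)) (a :: p).
  by apply: walk_meets_adhesion ep ZX aX nZY _; rewrite lp.
apply/exists_inP; exists s => //; case/splitPl: ps ep lp sp => p1 p2 ls.
rewrite cat_path last_cat size_cat ls => /andP [ep1 ep2] lp sp.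
rewrite eqn_leq (gdist_triangle e_connected) -sp.
by apply: leq_add; [exact: gdist_le_walk ep1 ls | exact: gdist_le_walk ep2 lp].
Qed.

End TreeDecomposition.

Section Laminar.
Variable T : finType.
Implicit Types (U : {set T}) (L : {set {set T}}).

Definition laminar L :=
  {in L &, forall F G : {set T}, [|| F \subset G, G \subset F | [disjoint F & G]]}.

Section DeletePoint.
Variables (L : {set {set T}}) (x : T).
Hypotheses (L_laminar : laminar L) (L_nonempty : set0 \notin L).

Definition delete_point := [set F :\ x | F in L & F :\ x != set0].

Lemma laminar_delete_point : laminar delete_point.
Proof.
move=> _ _ /imsetP [F /setIdP [LF _] ->] /imsetP [G /setIdP [LG _] ->].
case/or3P: (L_laminar LF LG) => [FG|GF|FG].
- by rewrite (setSD _ FG).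
- by rewrite (setSD _ GF) orbT.
- by rewrite (disjointW (subsetDl F _) (subsetDl G _)) ?orbT.
Qed.

Lemma delete_point_nonempty : set0 \notin delete_point.
Proof. by apply/imsetP => -[F /setIdP [_ /eqP nF] /esym]. Qed.

Lemma delete_point_sub U : L \subset powerset U -> delete_point \subset powerset (U :\ x).
Proof.
move=> /subsetP LU; apply/subsetP => _ /imsetP [F /setIdP [LF _] ->].
by rewrite inE setSD // -powersetE LU.
Qed.

Let setD1_id (G : {set T}) : x \notin G -> G :\ x = G.
Proof. by move=> xG; apply/setDidPl; rewrite disjoint_sym disjoints1. Qed.

Definition split_at_point := [set G in L | (x \in G) && (G :\ x \in L)].

Lemma card_split_at_point : #|split_at_point| <= 1.
Proof.
apply/card_le1_eqP => G1 G2; rewrite !inE => /and3P [L1 x1 L1'] /and3P [L2 x2 L2'].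
wlog sub12 : G1 G2 L1 x1 L1' L2 x2 L2' / G1 \subset G2.
  move=> wlog_sub; case/or3P: (L_laminar L1 L2) => [|sub21|/pred0P /(_ x)].
  - exact: wlog_sub.
  - by apply/esym/wlog_sub.
  - by rewrite /= x1 x2.
case/or3P: (L_laminar L1 L2') => [/subsetP /(_ x x1)|sub21|disj].
- by rewrite !inE eqxx.
- apply/eqP; rewrite eqEsubset sub12 andbT; apply/subsetP => y yG2.
  by have [->|nyx] := eqVneq y x; last by apply: (subsetP sub21); rewrite !inE nyx.
- have /set0Pn [y] : G1 :\ x != set0 by apply: contraNneq L_nonempty => <-.
  rewrite !inE => /andP [nyx yG1].
  by move: disj => /pred0P /(_ y); rewrite /= yG1 !inE nyx (subsetP sub12 _ yG1).
Qed.

Lemma card_delete_point : #|L| <= #|delete_point| + 2.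
Proof.
have inj : {in L :\: split_at_point &, injective (fun F => F :\ x)}.
  move=> F G /setDP [LF nF] /setDP [LG nG] eqFG.
  have [xF|xF] := boolP (x \in F); have [xG|xG] := boolP (x \in G).
  - by rewrite -(setD1K xF) -(setD1K xG) eqFG.
  - by case/negP: nF; rewrite inE LF xF eqFG setD1_id.
  - by case/negP: nG; rewrite inE LG xG -eqFG setD1_id.
  - by rewrite -(setD1_id xF) -(setD1_id xG) eqFG.
have sub_img : [set F :\ x | F in L :\: split_at_point] \subset set0 |: delete_point.
  apply/subsetP => _ /imsetP [F /setDP [LF _] ->]; rewrite !inE.
  by case: eqP => //= /eqP nF; apply/imsetP; exists F; rewrite ?inE ?LF.
have card_diff : #|L :\: split_at_point| <= #|delete_point| + 1.
  rewrite -(card_in_imset inj); apply: leq_trans (subset_leq_card sub_img) _.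
  by rewrite cardsU1 addnC leq_add2l leq_b1.
have card_meet : #|L :&: split_at_point| <= 1.
  exact: leq_trans (subset_leq_card (subsetIr _ _)) card_split_at_point.
by rewrite -(cardsID split_at_point L) addnC (_ : 2 = 1 + 1) // addnA leq_add.
Qed.

End DeletePoint.

Lemma card_laminar U L : laminar L -> set0 \notin L -> L \subset powerset U ->
  #|L| <= 2 * #|U|.
Proof.
move: {2}#|U| (erefl #|U|) => n; elim: n U L => [|n IHn] U L cardU L_lam L_ne LU.
  move: cardU => /eqP; rewrite cards_eq0 => /eqP U0.
  rewrite U0 cards0 muln0 leqn0 cards_eq0; apply/eqP/setP => F; rewrite inE.
  apply: contraNF L_ne => LF.
  by have := subsetP LU F LF; rewrite U0 powersetE subset0 => /eqP <-.
have [x Ux] : exists x, x \in U by apply/set0Pn; rewrite -card_gt0 cardU.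
have cardUx : #|U :\ x| = n by move: cardU; rewrite (cardsD1 x U) Ux => -[].
apply: leq_trans (card_delete_point x L_lam L_ne) _.
rewrite cardU mulnS addnC leq_add2l -cardUx.
exact: IHn cardUx (laminar_delete_point (x := x) L_lam) (delete_point_nonempty L x)
  (delete_point_sub x LU).
Qed.

End Laminar.

Section Counting.
Variables (T : finType) (e : rel T) (B : finType) (t : rel B) (bag : B -> {set T}).
Hypothesis e_sym : symmetric e.
Hypothesis e_connected : connected_graph e.
Hypothesis t_sym : symmetric t.
Hypothesis t_unique_path : forall X Z : B, exists! p, simple_path t X Z p.
Hypothesis bag_cover : forall v : T, exists X : B, v \in bag X.
Hypothesis edge_in_bag :
  forall u v : T, e u v -> exists X : B, (u \in bag X) && (v \in bag X).
Hypothesis bag_on_tree_path :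
  forall X Y Z : B, on_tree_path t X Z Y -> bag X :&: bag Z \subset bag Y.
Variable R : {set T}.
Hypothesis R_resolving : resolving e R.
Variable r0 : T.
Hypothesis R_r0 : r0 \in R.

Lemma resolving_eq u v : {in R, forall r, gdist e r u = gdist e r v} -> u = v.
Proof.
move=> Ruv; apply/eqP; apply: contraT => neq_uv.
by have [r Rr] := R_resolving neq_uv; rewrite Ruv ?eqxx.
Qed.

Definition home (v : T) : B := xchoose (bag_cover v).

Lemma home_bag v : v \in bag (home v).
Proof. exact: (xchooseP (bag_cover v)). Qed.

(* Rooting at the home of a resolving vertex makes [below root = R] nonempty, so
   that every vertex has an anchor. *)
Let root := home r0.
Local Notation ancestor := (ancestor t_unique_path root).
Local Notation depth := (depth t_unique_path root).
Local Notation adhesion := (adhesion bag t_unique_path root).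
Local Notation via_adhesion :=
  (via_adhesion e_connected t_sym edge_in_bag bag_on_tree_path (root := root)).

Definition below (Y : B) : {set T} := [set r in R | ancestor Y (home r)].

Lemma below_root : below root = R.
Proof. by apply/setP => r; rewrite inE ancestor_root andbT. Qed.

Lemma subset_below Y1 Y2 : ancestor Y1 Y2 -> below Y2 \subset below Y1.
Proof.
move=> Y12; apply/subsetP => r; rewrite !inE => /andP [-> Y2r].
exact: ancestor_trans Y12 Y2r.
Qed.

Lemma below_ancestor Y1 Y2 : below Y1 = below Y2 -> below Y1 != set0 ->
  depth Y1 <= depth Y2 -> ancestor Y1 Y2.
Proof.
move=> eq12 /set0Pn [r r1] le12; have r2 := r1; rewrite eq12 in r2.
move: r1 r2; rewrite !inE => /andP [_ a1] /andP [_ a2].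
case/orP: (ancestor_total a1 a2) => // a21.
by rewrite (ancestor_depth_eq a21 le12) ancestorxx.
Qed.

Definition anchor (v : T) : B :=
  [arg max_(Y > root | ancestor Y (home v) && (below Y != set0)) depth Y].

Definition key (v : T) : {set T} := below (anchor v).

Lemma anchor_spec v : [/\ ancestor (anchor v) (home v), key v != set0 &
  forall Y, ancestor Y (home v) -> below Y != set0 -> depth Y <= depth (anchor v)].
Proof.
rewrite /key /anchor; case: arg_maxnP => [|Y /andP [YX nY] Ymax].
  by rewrite ancestor_root below_root; apply/set0Pn; exists r0.
by split => // Y' Y'X nY'; apply: Ymax; rewrite Y'X nY'.
Qed.

(* [lowest K] and [highest K] are the deepest and the shallowest node whose [below]
   set is K; the value [root] is junk, for sets K that are no [below] set. *)
Definition lowest (K : {set T}) : B :=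
  if [pick Y | below Y == K] is Some Y0 then [arg max_(Y > Y0 | below Y == K) depth Y]
  else root.

Definition highest (K : {set T}) : B :=
  if [pick Y | below Y == K] is Some Y0 then [arg min_(Y < Y0 | below Y == K) depth Y]
  else root.

Lemma lowest_spec K Y : below Y = K ->
  below (lowest K) = K /\ forall Y', below Y' = K -> depth Y' <= depth (lowest K).
Proof.
move=> YK; rewrite /lowest; case: pickP => [Y0 Y0K|/(_ Y)]; last by rewrite YK eqxx.
by case: arg_maxnP => // Y1 /eqP Y1K Y1max; split=> // Y' /eqP; apply: Y1max.
Qed.

Lemma highest_spec K Y : below Y = K ->
  below (highest K) = K /\ forall Y', below Y' = K -> depth (highest K) <= depth Y'.
Proof.
move=> YK; rewrite /highest; case: pickP => [Y0 Y0K|/(_ Y)]; last by rewrite YK eqxx.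
by case: arg_minnP => // Y1 /eqP Y1K Y1min; split=> // Y' /eqP; apply: Y1min.
Qed.

Definition adhesion_class (K : {set T}) : {set T} :=
  [set v | (key v == K) && [forall r in R,
     via e (adhesion (if r \in K then lowest K else highest K)) r v]].

Definition bag_class (K : {set T}) : {set T} :=
  [set v | (key v == K) &&
     [exists S in powerset (bag (lowest K)), [forall r in R, via e S r v]]].

Lemma mem_adhesion_class v : depth (anchor v) < depth (lowest (key v)) ->
  v \in adhesion_class (key v).
Proof.
have [YX K0 Ymax] := anchor_spec v; set Y := anchor v in YX Ymax *; set K := key v in K0 *.
have [LoK Lomax] := lowest_spec (erefl K); have [HiK Himin] := highest_spec (erefl K).
move=> lt_YLo; rewrite inE eqxx; apply/forall_inP => r Rr.
case: ifP => rK.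
- apply: (via_adhesion (X := home r) (Y := home v)); rewrite ?home_bag //.
    by move: rK; rewrite -{1}LoK inE => /andP [].
  apply/negP => LoX; have := Ymax _ LoX; rewrite LoK => /(_ K0).
  by rewrite leqNgt lt_YLo.
- have HiY : ancestor (highest K) Y.
    by apply: below_ancestor; rewrite ?HiK ?Himin.
  rewrite viaC //; apply: (via_adhesion (X := home v) (Y := home r)); rewrite ?home_bag //.
    exact: ancestor_trans HiY YX.
  by apply: contraFN rK => Hir; rewrite -HiK inE Rr.
Qed.

Lemma mem_bag_class v : depth (lowest (key v)) <= depth (anchor v) ->
  v \in bag_class (key v).
Proof.
have [YX K0 Ymax] := anchor_spec v; set Y := anchor v in YX Ymax *; set K := key v in K0 *.
have [LoK Lomax] := lowest_spec (erefl K).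
move=> le_LoY; have LoY : lowest K = Y.
  by apply: ancestor_depth_eq (Lomax _ (erefl K)); apply: below_ancestor; rewrite ?LoK.
rewrite inE eqxx LoY /=; have [YXe|neq_YX] := eqVneq Y (home v).
  apply/exists_inP; exists [set v]; first by rewrite powersetE sub1set YXe home_bag.
  apply/forall_inP => r _; apply/exists_inP; exists v; first exact: set11.
  by rewrite gdistxx addn0.
have [Z [ZX pZ dZ]] := child_toward YX neq_YX.
have Z0 : below Z = set0.
  by apply/eqP; apply: contraT => /(Ymax _ ZX); rewrite dZ ltnn.
apply/exists_inP; exists (adhesion Z); first by rewrite powersetE -pZ subsetIl.
apply/forall_inP => r Rr; rewrite viaC //.
apply: (via_adhesion (X := home v) (Y := home r)); rewrite ?home_bag //.
by apply: contra_eqN Z0 => Zr; apply/set0Pn; exists r; rewrite inE Rr.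
Qed.

Lemma mem_key_classes v : v \in adhesion_class (key v) :|: bag_class (key v).
Proof.
rewrite inE; case: (ltnP (depth (anchor v)) (depth (lowest (key v)))).
  by move/mem_adhesion_class ->.
by move/mem_bag_class ->; rewrite orbT.
Qed.

Local Notation d := (diameter e).
Local Notation l := (td_length e bag).
Local Notation w := (td_width bag).

Lemma gdist_bag_le Y a b v : a \in bag Y -> b \in bag Y -> gdist e a v <= gdist e b v + l.
Proof.
move=> aY bY; rewrite addnC; apply: leq_trans (gdist_triangle e_connected a b v) _.
by rewrite leq_add2r (gdist_le_length e aY bY).
Qed.

Definition code := ('I_d.+1 * {ffun 'I_w.+1 -> 'I_(2 * l).+1})%type.

(* For S inside a bag, the distances from v to the points s_i of S differ from
   d(s_0, v) by at most l, hence the offsets d(s_i, v) + l - d(s_0, v) lie in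
   [0, 2l]: this is where the factor (2l + 1) per point of a bag comes from. *)
Definition encode (S : {set T}) (v : T) : code :=
  let s i := nth r0 (enum S) i in
  (inord (gdist e (s 0) v),
   [ffun i : 'I_w.+1 => inord (gdist e (s i) v + l - gdist e (s 0) v)]).

Lemma encode_inj Y (S : {set T}) u v : S \subset bag Y -> encode S u = encode S v ->
  {in S, forall s, gdist e s u = gdist e s v}.
Proof.
move=> SY [eq0 eqf] s Ss; set s0 := nth r0 (enum S) 0 in eq0 eqf.
have S0 : s0 \in S by rewrite -mem_enum mem_nth // -cardE card_gt0; apply/set0Pn; exists s.
have lt_s : index s (enum S) < w.+1.
  rewrite (leq_trans _ (card_bag_le bag Y)) // (leq_trans _ (subset_leq_card SY)) //.
  by rewrite cardE index_mem mem_enum.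
have sY := subsetP SY _ Ss; have s0Y := subsetP SY _ S0.
have := gdist_bag_le u sY s0Y; have := gdist_bag_le u s0Y sY.
have := gdist_bag_le v sY s0Y; have := gdist_bag_le v s0Y sY.
have := gdist_le_diameter e s0 u; have := gdist_le_diameter e s0 v.
move=> ? ? ? ? ? ?.
move/(congr1 (fun f : {ffun 'I_w.+1 -> 'I_(2 * l).+1} => val (f (Ordinal lt_s)))): eqf.
move/(congr1 val): eq0; rewrite /= !ffunE /= nth_index ?mem_enum //.
by rewrite !inordK; lia.
Qed.

Lemma card_adhesion_class K : #|adhesion_class K| <= #|{: code}| ^ 2.
Proof.
pose f v := (encode (adhesion (highest K)) v, encode (adhesion (lowest K)) v).
rewrite -mulnn -card_prod -(card_in_imset (f := f)) ?max_card //.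
move=> u v; rewrite !inE => /andP [_ /forall_inP uK] /andP [_ /forall_inP vK] eq_f.
have [/= eq_hi eq_lo] := (congr1 fst eq_f, congr1 snd eq_f).
apply: resolving_eq => r Rr; have := uK r Rr; have := vK r Rr.
case: ifP => _ vr ur; apply: (via_gdist_eq e_connected ur vr).
- exact: encode_inj (subsetIr _ _) eq_lo.
- exact: encode_inj (subsetIr _ _) eq_hi.
Qed.

Lemma card_bag_class K : #|bag_class K| <= 2 ^ w.+1 * #|{: code}|.
Proof.
pose S_of v := odflt set0 [pick S in powerset (bag (lowest K)) | [forall r in R, via e S r v]].
have S_ofP v : v \in bag_class K ->
    S_of v \subset bag (lowest K) /\ {in R, forall r, via e (S_of v) r v}.
  rewrite inE => /andP [_ /exists_inP [S SK SR]]; rewrite /S_of.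
  case: pickP => [S' /andP [S'K /forall_inP S'R] | /(_ S)]; last by rewrite SK SR.
  by rewrite -powersetE.
pose f v := (S_of v, encode (S_of v) v).
rewrite -(card_in_imset (f := f)).
  apply: (@leq_trans #|setX (powerset (bag (lowest K))) [set: code]|).
    apply/subset_leq_card/subsetP => _ /imsetP [v /S_ofP [Sv _] ->].
    by rewrite !inE Sv.
  by rewrite cardsX card_powerset cardsT leq_mul2r leq_exp2l ?card_bag_le ?orbT.
move=> u v /S_ofP [Su uR] /S_ofP [_ vR] eq_f.
have [/= eqS eq_enc] := (congr1 fst eq_f, congr1 snd eq_f); rewrite /= -eqS in eq_enc vR.
apply: resolving_eq => r Rr; apply: (via_gdist_eq e_connected (uR r Rr) (vR r Rr)).
exact: encode_inj Su eq_enc.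
Qed.

Definition keys : {set {set T}} := [set key v | v in T].

Lemma laminar_keys : laminar keys.
Proof.
move=> _ _ /imsetP [u _ ->] /imsetP [v _ ->].
have [|/pred0Pn [r /andP [/= ru rv]]] := boolP [disjoint key u & key v].
  by rewrite !orbT.
move: ru rv; rewrite !inE => /andP [_ ur] /andP [_ vr].
by case/orP: (ancestor_total ur vr) => /subset_below ->; rewrite ?orbT.
Qed.

Lemma card_keys : #|keys| <= 2 * #|R|.
Proof.
apply: card_laminar laminar_keys _ _.
  by apply/imsetP => -[v _ /esym]; have [_ /eqP] := anchor_spec v.
apply/subsetP => _ /imsetP [v _ ->]; rewrite powersetE.
by apply/subsetP => r; rewrite inE => /andP [].
Qed.

Lemma card_vertices_le : #|T| <= 2 * #|R| * (#|{: code}| ^ 2 + 2 ^ w.+1 * #|{: code}|).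
Proof.
apply: (@leq_trans (#|keys| * (#|{: code}| ^ 2 + 2 ^ w.+1 * #|{: code}|))); last first.
  by rewrite leq_mul2r card_keys orbT.
rewrite -[#|T|]sum1_card (partition_big key (mem keys)); last by move=> v _; apply: imset_f.
rewrite -sum_nat_const; apply: leq_sum => K _; rewrite sum1_card.
apply: leq_trans (leq_add (card_adhesion_class K) (card_bag_class K)).
apply: leq_trans (leq_card_setU _ _); apply/subset_leq_card/subsetP => v vK.
by have /eqP <- : key v == K := vK; apply: mem_key_classes.
Qed.

End Counting.

Lemma code_count_le d w q : 0 < d -> 0 < w -> 1 < q ->
  (d.+1 * q ^ w.+1) ^ 2 + 2 ^ w.+1 * (d.+1 * q ^ w.+1) <= 6 * (d ^ 2 * q ^ (3 * w + 1)).
Proof.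
move=> d_gt0 w_gt0 q_gt1; set P := q ^ w.+1; set Q := q ^ (3 * w + 1).
have le_PP : P ^ 2 <= Q by rewrite -expnM leq_pexp2l //; lia.
have le_2P : 2 ^ w.+1 <= P by rewrite leq_exp2r.
have le_d : d.+1 <= 2 * d by lia.
have h1 : (d.+1 * P) ^ 2 <= 4 * (d ^ 2 * Q).
  rewrite expnMn mulnA -[4 * _](expnMn 2 d 2).
  by apply: leq_mul; rewrite ?leq_exp2r.
have h2 : 2 ^ w.+1 * (d.+1 * P) <= 2 * (d ^ 2 * Q).
  apply: leq_trans (leq_mul le_2P (leq_mul le_d (leqnn P))) _.
  have -> : P * (2 * d * P) = 2 * (d * P ^ 2) by rewrite expnS expn1; nia.
  by rewrite leq_mul2l /=; apply: leq_mul le_PP; rewrite expnS expn1 leq_pmulr.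
by apply: leq_trans (leq_add h1 h2) _; rewrite -mulnDl.
Qed.

Theorem theorem2 :
  exists C : nat,
  forall (T : finType) (e : rel T) (B : finType) (t : rel B)
         (bag : B -> {set T}) (R : {set T}) (n d l w k : nat),
    simple_graph e -> connected_graph e -> 2 <= #|T| ->
    tree_decomposition e t bag -> reduced_td bag ->
    n = #|T| -> d = diameter e -> l = td_length e bag -> w = td_width bag ->
    resolving e R -> #|R| = k ->
    n <= C * (k * d ^ 2 * (2 * l + 1) ^ (3 * w + 1)).
Proof.
exists 12 => T e B t bag R n d l w k [e_sym e_irr] e_connected two_vertices.
case=> [[t_sym _ t_unique_path] bag_cover edge_in_bag bag_on_tree_path] _ -> -> -> ->.
move=> R_resolving <-; have [x [y exy]] := exists_edge e_connected two_vertices.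
have nxy : x != y by apply: contraTneq exy => ->; rewrite e_irr.
have [r0 R_r0 _] := R_resolving x y nxy.
have [X /andP [xX yX]] := edge_in_bag x y exy.
have [d_pos l_pos w_pos] := parameters_pos e_connected nxy xX yX.
have := card_vertices_le e_sym e_connected t_sym t_unique_path bag_cover edge_in_bag
  bag_on_tree_path R_resolving R_r0.
rewrite card_prod !card_ord card_ffun !card_ord addn1 => /leq_trans; apply.
have q_gt1 : 1 < (2 * td_length e bag).+1 by rewrite ltnS muln_gt0 l_pos.
apply: leq_trans (leq_mul (leqnn (2 * #|R|)) (code_count_le d_pos w_pos q_gt1)) _.
nia.
Qed.
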